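(* Let $(\mathbb{C},\mathcal{N})$ be a star-regular category satisfying property $( * )$. Let $F^*\rightrightarrows A$ and $G^*\rightrightarrows A$ be kernel stars with $F^*\subseteq G^*$, with coequalisers $f\colon A\to A/F^*$ and $g\colon A\to A/G^*$. Then $f(G^* )\rightrightarrows A/F^*$ is a kernel star, the unique morphism $q\colon A/F^*\to A/G^*$ with $qf=g$ is a coequaliser of $f(G^* )$, and hence $$A/G^*\;\cong\;\frac{A/F^*}{f(G^* )}.$$
   Context: Throughout, $\mathbb{C}$ is a finitely complete regular category with an ideal of morphisms $\mathcal{N}$ (a class such that $gf\in\mathcal{N}$ whenever $f\in\mathcal{N}$ or $g\in\mathcal{N}$). A star on $X$ is a pair of parallel morphisms $\tau=(\tau_1,\tau_2)\colon T\rightrightarrows X$ with $\tau_1\in\mathcal{N}$; monic if jointly monic. For stars $\sigma\colon S\rightrightarrows X$, $\tau\colon T\rightrightarrows X$, write $S\subseteq T$ if there is $h\colon S\to T$ with $\tau_ih=\sigma_i$. An $\mathcal{N}$-kernel of $f$ is a morphism $k$ into its domain with $fk\in\mathcal{N}$, universal with this property. For a relation $\rho=(\rho_1,\rho_2)$, $\rho^*=(\rho_1k,\rho_2k)$ with $k$ the $\mathcal{N}$-kernel of $\rho_1$. The kernel star of $f\colon X\to Y$ (capital letter $F^*$) is $Eq(f)^*$ for $Eq(f)$ the kernel pair of $f$; a kernel star on $X$ is the kernel star of some morphism with domain $X$. Every star factors uniquely up to isomorphism as a regular epimorphism followed by a monic star; for $f\colon X\to Y$ and a star $\lambda$ on $X$,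 $f(\lambda)$ is the monic star part of the factorisation of $(f\lambda_1,f\lambda_2)$. A star-regular category is a regular multi-pointed category with $\mathcal{N}$-kernels in which every regular epimorphism is a coequaliser of some star; there every kernel star $F^*$ on $A$ has a coequaliser $A\to A/F^*$, and $X/S$ denotes the codomain of the coequaliser of a star $S$ on $X$. Property $( * )$: for every kernel star $F^*\rightrightarrows A$ with coequaliser $f$ and every kernel star $G^*\rightrightarrows A$ with $F^*\subseteq G^*$, the star $f(G^* )\rightrightarrows A/F^*$ is a kernel star. *)

Set Implicit Arguments.
Unset Strict Implicit.

Record Cat := {
  Ob :> Type;
  Hom : Ob -> Ob -> Type;
  cid : forall X, Hom X X;
  comp : forall X Y Z, Hom Y Z -> Hom X Y -> Hom X Z;
  comp_id_l : forall X Y (f : Hom X Y), comp (cid Y) f = f;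
  comp_id_r : forall X Y (f : Hom X Y), comp f (cid X) = f;
  comp_assoc : forall X Y Z W (f : Hom X Y) (g : Hom Y Z) (h : Hom Z W),
      comp h (comp g f) = comp (comp h g) f
}.
Arguments Hom {c} X Y.
Arguments cid {c} X.
Arguments comp {c X Y Z} g f.
Notation "g \o f" := (comp g f) (at level 40, left associativity).

Section CatDefs.
Variable C : Cat.

Definition MorClass := forall (X Y : C), Hom X Y -> Prop.

Definition is_iso {X Y : C} (f : Hom X Y) : Prop :=
  exists g : Hom Y X, g \o f = cid X /\ f \o g = cid Y.

Definition is_terminal (T : C) : Prop :=
  forall X : C, exists! u : Hom X T, True.

Definition is_pullback {X Y Z P : C} (f : Hom X Z) (g : Hom Y Z)
  (p1 : Hom P X) (p2 : Hom P Y) : Prop :=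
  f \o p1 = g \o p2 /\
  forall (W : C) (a : Hom W X) (b : Hom W Y), f \o a = g \o b ->
    exists! u : Hom W P, p1 \o u = a /\ p2 \o u = b.

Definition is_kernel_pair {X Y P : C} (f : Hom X Y) (p1 p2 : Hom P X) : Prop :=
  is_pullback f f p1 p2.

Definition is_coequaliser {R X Q : C} (a b : Hom R X) (q : Hom X Q) : Prop :=
  q \o a = q \o b /\
  forall (W : C) (h : Hom X W), h \o a = h \o b ->
    exists! u : Hom Q W, u \o q = h.

Definition is_regular_epi {X Q : C} (e : Hom X Q) : Prop :=
  exists (R : C) (a b : Hom R X), is_coequaliser a b e.

Definition jointly_monic {T X : C} (a b : Hom T X) : Prop :=
  forall (W : C) (u v : Hom W T), a \o u = a \o v -> b \o u = b \o v -> u = v.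

Definition finitely_complete : Prop :=
  (exists T : C, is_terminal T) /\
  forall (X Y Z : C) (f : Hom X Z) (g : Hom Y Z),
    exists (P : C) (p1 : Hom P X) (p2 : Hom P Y), is_pullback f g p1 p2.

Definition is_regular : Prop :=
  finitely_complete /\
  (forall (X Y P : C) (f : Hom X Y) (p1 p2 : Hom P X), is_kernel_pair f p1 p2 ->
     exists (Q : C) (q : Hom X Q), is_coequaliser p1 p2 q) /\
  (forall (X Y Z P : C) (e : Hom X Z) (g : Hom Y Z) (p1 : Hom P X) (p2 : Hom P Y),
     is_regular_epi e -> is_pullback e g p1 p2 -> is_regular_epi p2).

Variable N : MorClass.

Definition is_ideal : Prop :=
  forall (X Y Z : C) (f : Hom X Y) (g : Hom Y Z), (N f \/ N g) -> N (g \o f).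


Definition is_Nkernel {X Y K : C} (f : Hom X Y) (k : Hom K X) : Prop :=
  N (f \o k) /\
  forall (W : C) (h : Hom W X), N (f \o h) -> exists! u : Hom W K, k \o u = h.

Definition has_Nkernels : Prop :=
  forall (X Y : C) (f : Hom X Y), exists (K : C) (k : Hom K X), is_Nkernel f k.

Record star (X : C) := Star {
  sdom : C;
  s1 : Hom sdom X;
  s2 : Hom sdom X;
  s1N : N s1
}.

Definition monic_star {X : C} (S : star X) : Prop := jointly_monic (s1 S) (s2 S).

Definition star_sub {X : C} (S T : star X) : Prop :=
  exists h : Hom (sdom S) (sdom T), s1 T \o h = s1 S /\ s2 T \o h = s2 S.

(* S is (a representative of) the kernel star F^* = Eq(f)^* of f. *)
Definition is_kernel_star_of {X Y : C} (f : Hom X Y) (S : star X) : Prop :=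
  exists (P : C) (p1 p2 : Hom P X) (k : Hom (sdom S) P),
    is_kernel_pair f p1 p2 /\ is_Nkernel p1 k /\
    s1 S = p1 \o k /\ s2 S = p2 \o k.

Definition is_kernel_star {X : C} (S : star X) : Prop :=
  exists (Y : C) (f : Hom X Y), is_kernel_star_of f S.

(* M is (a representative of) f(L): the monic-star part of the
   (regular epi, monic star) factorisation of (f L1, f L2). *)
Definition is_star_image {X Y : C} (f : Hom X Y) (L : star X) (M : star Y) : Prop :=
  monic_star M /\
  exists e : Hom (sdom L) (sdom M),
    is_regular_epi e /\ s1 M \o e = f \o s1 L /\ s2 M \o e = f \o s2 L.

(* Regular multi-pointed category (Gran-Janelidze-Ursini): C regular, N an
   ideal, and N closed under regular images (g e in N, e regular epi => g in N). *)
Definition regular_multi_pointed : Prop :=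
  is_regular /\ is_ideal /\
  (forall (X Y Z : C) (e : Hom X Y) (g : Hom Y Z),
     is_regular_epi e -> N (g \o e) -> N g).

Definition star_regular : Prop :=
  regular_multi_pointed /\ has_Nkernels /\
  forall (X Q : C) (e : Hom X Q), is_regular_epi e ->
    exists S : star X, is_coequaliser (s1 S) (s2 S) e.

Definition property_star : Prop :=
  forall (A AF : C) (F G : star A) (f : Hom A AF),
    is_kernel_star F -> is_kernel_star G -> star_sub F G ->
    is_coequaliser (s1 F) (s2 F) f ->
    forall M : star AF, is_star_image f G M -> is_kernel_star M.

End CatDefs.


Set Implicit Arguments.
Unset Strict Implicit.

(* Everything except the kernel-star claim, which is exactly property ( * ),
   is elementary: [q] exists because [F] factors through [G]; since [f] is
   epi, a morphism out of [A/F] coequalises [f(G)] iff its composite with [f]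
   coequalises [G], so [q] is a coequaliser of [f(G)] and any other one is
   isomorphic to it. The image star [f(G)] exists because a regular category
   factors every morphism into [A/F * A/F] as a regular epi followed by a
   mono, and the first leg of the mono part lies in [N] since [N] is closed
   under regular images. *)

Section RegularCategoryFacts.
Variable C : Cat.

Definition monic {X Y : C} (m : Hom X Y) : Prop :=
  forall (W : C) (u v : Hom W X), m \o u = m \o v -> u = v.

Lemma coequaliser_epi (R X Q : C) (a b : Hom R X) (q : Hom X Q) :
  is_coequaliser a b q -> forall W (u v : Hom Q W), u \o q = v \o q -> u = v.
Proof.
  intros [Hq Huniv] W u v E.
  destruct (Huniv W (u \o q)) as [w [_ Hw]].
  { rewrite <- !comp_assoc, Hq. reflexivity. }
  transitivity w; [symmetry|]; apply Hw; auto.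
Qed.

Lemma regular_epi_epi (X Q : C) (q : Hom X Q) :
  is_regular_epi q -> forall W (u v : Hom Q W), u \o q = v \o q -> u = v.
Proof. intros [R [a [b Hcoeq]]]. exact (coequaliser_epi Hcoeq). Qed.

Lemma coequaliser_iso (R X Q Q' : C) (a b : Hom R X) (c : Hom X Q) (q : Hom X Q') :
  is_coequaliser a b c -> is_coequaliser a b q ->
  exists i : Hom Q Q', is_iso i /\ i \o c = q.
Proof.
  intros Hc Hq.
  destruct (proj2 Hc Q' q (proj1 Hq)) as [i [Hi _]].
  destruct (proj2 Hq Q c (proj1 Hc)) as [j [Hj _]].
  exists i. split; [exists j; split|exact Hi].
  - apply (coequaliser_epi Hc). rewrite <- comp_assoc, Hi, Hj, comp_id_l. reflexivity.
  - apply (coequaliser_epi Hq). rewrite <- comp_assoc, Hj, Hi, comp_id_l. reflexivity.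
Qed.

Lemma coequaliser_of_image_pair (S T A B Q : C) (x1 x2 : Hom S A) (y1 y2 : Hom T B)
    (e : Hom S T) (f : Hom A B) (g : Hom A Q) (q : Hom B Q) :
  (forall W (u v : Hom T W), u \o e = v \o e -> u = v) ->
  (forall W (u v : Hom B W), u \o f = v \o f -> u = v) ->
  y1 \o e = f \o x1 -> y2 \o e = f \o x2 ->
  is_coequaliser x1 x2 g -> q \o f = g -> is_coequaliser y1 y2 q.
Proof.
  intros He Hf E1 E2 [Hgx Hguniv] Hq. split.
  - apply He. rewrite <- !comp_assoc, E1, E2, !comp_assoc, Hq. exact Hgx.
  - intros W h Hh.
    destruct (Hguniv W (h \o f)) as [u [Hu Huniq]].
    { rewrite <- !comp_assoc, <- E1, <- E2, !comp_assoc, Hh. reflexivity. }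
    exists u. split.
    + apply Hf. rewrite <- comp_assoc, Hq. exact Hu.
    + intros u' Hu'. apply Huniq. rewrite <- Hq, comp_assoc, Hu'. reflexivity.
Qed.

Lemma terminal_hom_unique (T : C) :
  is_terminal T -> forall Z (x y : Hom Z T), x = y.
Proof.
  intros HT Z x y. destruct (HT Z) as [w [_ Hw]].
  transitivity w; [symmetry|]; apply Hw; auto.
Qed.

Lemma pullback_jointly_monic (X Z P : C) (f g : Hom X Z) (p1 p2 : Hom P X) :
  is_pullback f g p1 p2 -> jointly_monic p1 p2.
Proof.
  intros [Hsq Huniv] W u v E1 E2.
  destruct (Huniv W (p1 \o u) (p2 \o u)) as [z [_ Hz]].
  { rewrite !comp_assoc, Hsq. reflexivity. }
  transitivity z; [symmetry|]; apply Hz; auto.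
Qed.

Lemma square_product_exists (Y : C) :
  finitely_complete C ->
  exists (P : C) (p1 p2 : Hom P Y), jointly_monic p1 p2 /\
    forall X (h1 h2 : Hom X Y), exists h, p1 \o h = h1 /\ p2 \o h = h2.
Proof.
  intros [[T HT] Hpb].
  destruct (HT Y) as [t _].
  destruct (Hpb Y Y T t t) as [P [p1 [p2 HP]]].
  exists P, p1, p2. split; [exact (pullback_jointly_monic HP)|].
  intros X h1 h2.
  destruct (proj2 HP X h1 h2 (terminal_hom_unique HT _ _)) as [h [Hh _]].
  exists h. exact Hh.
Qed.

(* Pulling [e] back along [u] and then along [v] produces regular epis [e1],
   [e2] with [u e1 e2 = e a e2] and [v e1 e2 = e b], where [(a e2, b)] lies in
   the kernel pair of [h]; cancelling them gives [u = v]. *)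
Lemma kernel_pair_coequaliser_factor_monic (X Y K I : C) (h : Hom X Y)
    (k1 k2 : Hom K X) (e : Hom X I) (m : Hom I Y) :
  is_regular C -> is_kernel_pair h k1 k2 -> is_coequaliser k1 k2 e ->
  m \o e = h -> monic m.
Proof.
  intros [[_ Hpb] [_ Hstable]] Hker He Hm W u v Euv.
  assert (Re : is_regular_epi e) by (exists K, k1, k2; exact He).
  destruct (Hpb X W I e u) as [W1 [a [e1 Hpb1]]].
  pose proof (Hstable _ _ _ _ _ _ _ _ Re Hpb1) as Re1.
  destruct Hpb1 as [Hsq1 _].
  destruct (Hpb X W1 I e (v \o e1)) as [W2 [b [e2 Hpb2]]].
  pose proof (Hstable _ _ _ _ _ _ _ _ Re Hpb2) as Re2.
  destruct Hpb2 as [Hsq2 _].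
  destruct (proj2 Hker W2 (a \o e2) b) as [s [[Hs1 Hs2] _]].
  { rewrite <- Hm, <- !comp_assoc, (comp_assoc e2 a e), Hsq1, Hsq2,
      !comp_assoc, Euv. reflexivity. }
  apply (regular_epi_epi Re1). apply (regular_epi_epi Re2).
  rewrite <- Hsq1, <- comp_assoc, <- Hs1, comp_assoc, (proj1 He),
    <- comp_assoc, Hs2, Hsq2. reflexivity.
Qed.

Lemma regular_epi_monic_factorisation (X Y : C) (h : Hom X Y) :
  is_regular C ->
  exists (I : C) (e : Hom X I) (m : Hom I Y),
    is_regular_epi e /\ monic m /\ m \o e = h.
Proof.
  intros Hreg. pose proof Hreg as [[_ Hpb] [Hkpcoeq _]].
  destruct (Hpb X X Y h h) as [K [k1 [k2 Hker]]].
  destruct (Hkpcoeq X Y K h k1 k2 Hker) as [I [e He]].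
  destruct (proj2 He Y h (proj1 Hker)) as [m [Hm _]].
  exists I, e, m. split; [exists K, k1, k2; exact He|].
  split; [exact (kernel_pair_coequaliser_factor_monic Hreg Hker He Hm)|exact Hm].
Qed.

Lemma regular_epi_jointly_monic_factorisation (X Y : C) (h1 h2 : Hom X Y) :
  is_regular C ->
  exists (I : C) (e : Hom X I) (m1 m2 : Hom I Y),
    is_regular_epi e /\ jointly_monic m1 m2 /\ m1 \o e = h1 /\ m2 \o e = h2.
Proof.
  intros Hreg.
  destruct (square_product_exists Y (proj1 Hreg)) as [P [p1 [p2 [Hjm Hpair]]]].
  destruct (Hpair X h1 h2) as [h [Hh1 Hh2]].
  destruct (regular_epi_monic_factorisation h Hreg) as [I [e [m [Re [Hmono Hm]]]]].
  exists I, e, (p1 \o m), (p2 \o m). split; [exact Re|]. split.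
  - intros W u v E1 E2. apply Hmono, Hjm; rewrite !comp_assoc; assumption.
  - rewrite <- !comp_assoc, Hm. auto.
Qed.

End RegularCategoryFacts.

Section StarFacts.
Variables (C : Cat) (N : MorClass C).

Lemma star_image_exists (X Y : C) (f : Hom X Y) (L : star N X) :
  regular_multi_pointed N -> exists M : star N Y, is_star_image f L M.
Proof.
  intros [Hreg [Hideal Hclosed]].
  destruct (regular_epi_jointly_monic_factorisation (f \o s1 L) (f \o s2 L) Hreg)
    as [I [e [m1 [m2 [Re [Hjm [E1 E2]]]]]]].
  assert (Nm1 : N m1).
  { apply (Hclosed _ _ _ e m1 Re). rewrite E1. apply Hideal. left. apply s1N. }
  exists (@Star C N Y I m1 m2 Nm1). split; [exact Hjm|]. exists e. auto.
Qed.

Lemma star_sub_coequaliser_factor (X Q Q' : C) (F G : star N X)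
    (f : Hom X Q) (g : Hom X Q') :
  star_sub F G -> is_coequaliser (s1 F) (s2 F) f -> is_coequaliser (s1 G) (s2 G) g ->
  exists! q : Hom Q Q', q \o f = g.
Proof.
  intros [k [Hk1 Hk2]] [_ Hfuniv] [Hg _].
  apply Hfuniv. rewrite <- Hk1, <- Hk2, !comp_assoc, Hg. reflexivity.
Qed.

End StarFacts.

Theorem proposition2p11 (C : Cat) (N : MorClass C)
  (HSR : star_regular N) (Hstar : property_star N)
  (A AF AG : C) (F G : star N A)
  (HF : is_kernel_star F) (HG : is_kernel_star G) (HFG : star_sub F G)
  (f : Hom A AF) (g : Hom A AG)
  (Hf : is_coequaliser (s1 F) (s2 F) f) (Hg : is_coequaliser (s1 G) (s2 G) g) :
  (exists M : star N AF, is_star_image f G M) /\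
  (exists! q : Hom AF AG, q \o f = g) /\
  forall M : star N AF, is_star_image f G M ->
    is_kernel_star M /\
    (forall q : Hom AF AG, q \o f = g -> is_coequaliser (s1 M) (s2 M) q) /\
    (forall (Q : C) (c : Hom AF Q), is_coequaliser (s1 M) (s2 M) c ->
       exists i : Hom Q AG, is_iso i /\ i \o c \o f = g).
Proof.
  destruct HSR as [Hrmp _].
  pose proof (star_sub_coequaliser_factor HFG Hf Hg) as Hq.
  split; [exact (star_image_exists f G Hrmp)|]. split; [exact Hq|].
  intros M HM. split; [exact (Hstar A AF F G f HF HG HFG Hf M HM)|].
  destruct HM as [_ [e [Re [E1 E2]]]].
  assert (Hcoeq : forall q : Hom AF AG, q \o f = g -> is_coequaliser (s1 M) (s2 M) q).
  { intros q Hqf.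
    exact (coequaliser_of_image_pair (regular_epi_epi Re)
             (coequaliser_epi Hf) E1 E2 Hg Hqf). }
  split; [exact Hcoeq|].
  intros Q c Hc.
  destruct Hq as [q [Hqf _]].
  destruct (coequaliser_iso Hc (Hcoeq q Hqf)) as [i [Hiso Hic]].
  exists i. split; [exact Hiso|]. rewrite Hic. exact Hqf.
Qed.
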